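(* If $x$ is a monic commutator in $P_n$ and $S\subseteq N$, then $\phi_S(x)=1$ if and only if $\sigma(x)\cap S\neq\emptyset$.
   Context: $P_n$ denotes the pure braid group on $n$ strands, generated by elements $p_{a,b}$ for $1\le a<b\le n$ subject to the relations: (A) $p_{a,b}p_{a,c}p_{b,c}=p_{a,c}p_{b,c}p_{a,b}=p_{b,c}p_{a,b}p_{a,c}$ for $1\le a<b<c\le n$; (B) $p_{a,b}p_{c,d}=p_{c,d}p_{a,b}$ and $p_{a,d}p_{b,c}=p_{b,c}p_{a,d}$ for $1\le a<b<c<d\le n$; (C) $p_{a,c}p_{b,c}^{-1}p_{b,d}p_{b,c}=p_{b,c}^{-1}p_{b,d}p_{b,c}p_{a,c}$ for $1\le a<b<c<d\le n$. Let $N=\{1,\dots,n\}$. For $S\subseteq N$: $P_S$ is the subgroup generated by the $p_{a,b}$ with $a,b\in S$; $\phi_S:P_n\to P_n$ is the homomorphism with $\phi_S(p_{a,b})=p_{a,b}$ if $a\notin S$ and $b\notin S$, and $\phi_S(p_{a,b})=1$ otherwise. Commutator convention: $[x,y]=x^{-1}y^{-1}xy$. Monic commutators are defined recursively: each $p_{a,b}$ and $p_{a,b}^{-1}$ ($1\le a<b\le n$) is a monic commutator; if $x,y$ are monic commutators and $[x,y]\neq1$, then $[x,y]$ is a monic commutator. The support $\sigma(x)$ of $x\in P_n$ is the intersection of all $S\subseteq N$ such that $x\in P_S$. *)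

(* The pure braid group P_n is encoded by its presentation:
   elements are words in the generators p_{a,b}^{±1} (a < b), and equality
   in P_n is the congruence [peq] generated by free cancellation and the
   defining relations (A), (B), (C). Strands are indexed by 'I_n (0-based). *)
From mathcomp Require Import all_boot.
Set Implicit Arguments. Unset Strict Implicit. Unset Printing Implicit Defensive.

Definition gen (n : nat) := {p : 'I_n * 'I_n | p.1 < p.2}.

(* letters: (g, false) = g, (g, true) = g^{-1} *)
Definition letter (n : nat) := (gen n * bool)%type.
Definition word (n : nat) := seq (letter n).

Definition lt_inv n (l : letter n) : letter n := (l.1, ~~ l.2).
Definition winv n (w : word n) : word n := rev (map (@lt_inv n) w).

Definition pg n (a b : 'I_n) (h : a < b) : letter n := (exist _ (a, b) h, false).
Definition pgi n (a b : 'I_n) (h : a < b) : letter n := (exist _ (a, b) h, true).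

Inductive prel (n : nat) : word n -> word n -> Prop :=
| rel_cancel (l : letter n) : prel [:: l; lt_inv l] [::]
| rel_A1 (a b c : 'I_n) (hab : a < b) (hac : a < c) (hbc : b < c) :
    prel [:: pg hab; pg hac; pg hbc] [:: pg hac; pg hbc; pg hab]
| rel_A2 (a b c : 'I_n) (hab : a < b) (hac : a < c) (hbc : b < c) :
    prel [:: pg hab; pg hac; pg hbc] [:: pg hbc; pg hab; pg hac]
| rel_B1 (a b c d : 'I_n) (hab : a < b) (hbc : b < c) (hcd : c < d) :
    prel [:: pg hab; pg hcd] [:: pg hcd; pg hab]
| rel_B2 (a b c d : 'I_n) (hab : a < b) (hbc : b < c) (hcd : c < d)
    (had : a < d) :
    prel [:: pg had; pg hbc] [:: pg hbc; pg had]
| rel_C (a b c d : 'I_n) (hab : a < b) (hbc : b < c) (hcd : c < d)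
    (hac : a < c) (hbd : b < d) :
    prel [:: pg hac; pgi hbc; pg hbd; pg hbc]
         [:: pgi hbc; pg hbd; pg hbc; pg hac].

Inductive peq (n : nat) : word n -> word n -> Prop :=
| peq_step (u v l r : word n) : prel l r -> peq (u ++ l ++ v) (u ++ r ++ v)
| peq_refl (w : word n) : peq w w
| peq_sym (w1 w2 : word n) : peq w1 w2 -> peq w2 w1
| peq_trans (w1 w2 w3 : word n) : peq w1 w2 -> peq w2 w3 -> peq w1 w3.

Definition is_one n (w : word n) : Prop := peq w [::].

Definition comm n (x y : word n) : word n := winv x ++ winv y ++ x ++ y.

Inductive monic n : word n -> Prop :=
| monic_gen (g : gen n) (e : bool) : monic [:: (g, e)]
| monic_comm (x y : word n) : monic x -> monic y -> ~ is_one (comm x y) ->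
    monic (comm x y).

Definition gen_in n (S : {set 'I_n}) (g : gen n) : bool :=
  ((sval g).1 \in S) && ((sval g).2 \in S).
Definition gen_avoids n (S : {set 'I_n}) (g : gen n) : bool :=
  ((sval g).1 \notin S) && ((sval g).2 \notin S).

Definition in_PS n (S : {set 'I_n}) (x : word n) : Prop :=
  exists w : word n, all (fun l => gen_in S l.1) w /\ peq x w.

(* phi_S, on words (it respects peq) *)
Definition phi n (S : {set 'I_n}) (x : word n) : word n :=
  filter (fun l => gen_avoids S l.1) x.

Definition in_support n (x : word n) (a : 'I_n) : Prop :=
  forall S : {set 'I_n}, in_PS S x -> a \in S.

From mathcomp Require Import all_boot ssralg ssrint zify.
From Stdlib Require Import Classical.
Set Implicit Arguments. Unset Strict Implicit. Unset Printing Implicit Defensive.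

(* The map phi_S is a well-defined endomorphism of P_n that kills exactly the
   generators touching S. The sets T with x in P_T are closed under
   intersection, so x lies in P_T for T = N \ S as soon as sigma(x) misses S;
   phi_S is the identity on such words, and a monic commutator is never 1.
   Conversely sigma([y,z]) is contained in sigma(y) u sigma(z), so a strand of
   S in sigma(x) descends along the commutator tree to a generator through S,
   which phi_S kills, and a commutator with a trivial entry is trivial. *)

Section PureBraidWords.
Variable n : nat.
Implicit Types (u v w x y z : word n) (S T U : {set 'I_n}).

Lemma peq_ctx p q u v : peq u v -> peq (p ++ u ++ q) (p ++ v ++ q).
Proof.
elim=> [u0 v0 l r H|w|w1 w2 _ IH|w1 w2 w3 _ IH1 _ IH2].
- by have := peq_step (p ++ u0) (v0 ++ q) H; rewrite -!catA.
- exact: peq_refl.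
- exact: peq_sym.
- exact: peq_trans IH2.
Qed.

Lemma peq_cat u u' v v' : peq u u' -> peq v v' -> peq (u ++ v) (u' ++ v').
Proof.
move=> Hu Hv; apply: (@peq_trans _ _ (u' ++ v)).
- exact: (@peq_ctx [::] v _ _ Hu).
- by have := peq_ctx u' [::] Hv; rewrite !cats0.
Qed.

Lemma prel_peq (l r : word n) : prel l r -> peq l r.
Proof. by move=> H; have := @peq_step _ [::] [::] _ _ H; rewrite /= !cats0. Qed.

Lemma lt_invK : involutive (@lt_inv n).
Proof. by case=> g e; rewrite /lt_inv /= negbK. Qed.

Lemma winvK : involutive (@winv n).
Proof.
move=> w; rewrite /winv map_rev revK -map_comp -[RHS]map_id.
by apply: eq_map => l /=; rewrite lt_invK.
Qed.

Lemma winv_cons (l : letter n) w : winv (l :: w) = winv w ++ [:: lt_inv l].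
Proof. by rewrite /winv /= rev_cons cats1. Qed.

Lemma is_one_winv_cat w : is_one (winv w ++ w).
Proof.
elim: w => [|l w IH]; first exact: peq_refl.
rewrite winv_cons -catA; apply: peq_trans IH.
have := peq_ctx (winv w) w (prel_peq (rel_cancel (lt_inv l))).
by rewrite lt_invK.
Qed.

Lemma peq_winv u v : peq u v -> peq (winv u) (winv v).
Proof.
move=> Huv.
have vK : is_one (v ++ winv v) by have := is_one_winv_cat (winv v); rewrite winvK.
apply: (@peq_trans _ _ (winv u ++ (v ++ winv v))).
  by have := peq_cat (peq_refl (winv u)) (peq_sym vK); rewrite cats0.
apply: (@peq_trans _ _ (winv u ++ (u ++ winv v))).
  exact: peq_cat (peq_refl _) (peq_cat (peq_sym Huv) (peq_refl _)).
by rewrite catA; have := peq_cat (is_one_winv_cat u) (peq_refl (winv v)).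
Qed.

Lemma is_one_comml y z : is_one y -> is_one (comm y z).
Proof.
move=> y1; apply: (@peq_trans _ _ (winv z ++ z)); last exact: is_one_winv_cat.
exact: (peq_cat (peq_winv y1) (peq_cat (peq_refl _) (peq_cat y1 (peq_refl _)))).
Qed.

Lemma is_one_commr y z : is_one z -> is_one (comm y z).
Proof.
move=> z1; apply: (@peq_trans _ _ (winv y ++ y)); last exact: is_one_winv_cat.
have := peq_cat (peq_refl (winv y)) (peq_cat (peq_winv z1) (peq_cat (peq_refl y) z1)).
by rewrite cats0.
Qed.

Section ExponentSum.
Local Open Scope ring_scope.

Definition exponent (g : gen n) (l : letter n) : int :=
  if l.1 == g then (if l.2 then -1 else 1) else 0.

Definition exponent_sum (g : gen n) w : int := \sum_(l <- w) exponent g l.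

Lemma exponent_sum_cat g u v :
  exponent_sum g (u ++ v) = exponent_sum g u + exponent_sum g v.
Proof. exact: big_cat. Qed.

Lemma exponent_sum_prel g (l r : word n) :
  prel l r -> exponent_sum g l = exponent_sum g r.
Proof.
rewrite /exponent_sum; case=> [[h e]|*|*|*|*|*]; rewrite !big_cons big_nil /=; try lia.
by rewrite /exponent /=; case: (h == g); case: e.
Qed.

Lemma exponent_sum_peq g u v : peq u v -> exponent_sum g u = exponent_sum g v.
Proof.
elim=> [u0 v0 l r H|w|w1 w2 _ IH|w1 w2 w3 _ IH1 _ IH2] //.
- by rewrite !exponent_sum_cat (exponent_sum_prel g H).
- by rewrite IH1.
Qed.

End ExponentSum.

Lemma monic_not_one x : monic x -> ~ is_one x.
Proof.
case=> [g e|y z _ _ //] x1.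
have := exponent_sum_peq g x1.
by rewrite /exponent_sum big_seq1 big_nil /exponent eqxx; case: (e).
Qed.

Lemma phi_cat S u v : phi S (u ++ v) = phi S u ++ phi S v.
Proof. exact: filter_cat. Qed.

Lemma phi_winv S w : phi S (winv w) = winv (phi S w).
Proof. by rewrite /phi /winv filter_rev filter_map. Qed.

Lemma phi_comm S y z : phi S (comm y z) = comm (phi S y) (phi S z).
Proof. by rewrite /comm !phi_cat !phi_winv. Qed.

Lemma phi_prel S (l r : word n) : prel l r -> peq (phi S l) (phi S r).
Proof.
case=> [l0|a b c hab hac hbc|a b c hab hac hbc|a b c d hab hbc hcd
       |a b c d hab hbc hcd had|a b c d hab hbc hcd hac hbd].
- rewrite /phi /=; case: ifP => l0S /=; rewrite l0S; last exact: peq_refl.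
  exact: prel_peq (rel_cancel _).
all: rewrite /phi /= /gen_avoids /=.
all: try (case: (a \in S); case: (b \in S); case: (c \in S); try case: (d \in S)) => /=.
all: try exact: peq_refl.
all: try (apply: prel_peq; first [ exact: rel_A1 | exact: rel_A2
  | exact: (rel_B1 _ hbc) | exact: (rel_B2 _ _ _ had) | exact: (rel_C hab hbc hcd)]).
(* only b in S in relation (C): the conjugating letters cancel. *)
have cancel_bc := prel_peq (rel_cancel (pgi hbc)).
apply: (@peq_trans _ _ [:: pg hac]); first exact: (peq_ctx [:: pg hac] [::] cancel_bc).
exact: peq_sym (peq_ctx [::] [:: pg hac] cancel_bc).
Qed.

Lemma phi_peq S u v : peq u v -> peq (phi S u) (phi S v).
Proof.
elim=> [u0 v0 l r H|w|w1 w2 _ IH|w1 w2 w3 _ IH1 _ IH2].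
- by rewrite !phi_cat; apply: peq_ctx; apply: phi_prel.
- exact: peq_refl.
- exact: peq_sym.
- exact: peq_trans IH2.
Qed.

Lemma gen_avoidsC S g : gen_avoids (~: S) g = gen_in S g.
Proof. by rewrite /gen_in /gen_avoids !in_setC !negbK. Qed.

Lemma phi_id S w : all (fun l => gen_in (~: S) l.1) w -> phi S w = w.
Proof.
by move=> wS; apply/all_filterP; apply: sub_all wS => l; rewrite -gen_avoidsC setCK.
Qed.

Lemma phi_in_PS_setC S x : in_PS (~: S) x -> peq (phi S x) x.
Proof.
by case=> w [wS xw]; apply: peq_trans (phi_peq S xw) _; rewrite phi_id //; apply: peq_sym.
Qed.

Lemma in_PS_setT x : in_PS setT x.
Proof.
by exists x; split; [apply/allP => l _; rewrite /gen_in !in_setT | apply: peq_refl].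
Qed.

Lemma in_PS_subset T U x : T \subset U -> in_PS T x -> in_PS U x.
Proof.
move=> sTU [w [wT xw]]; exists w; split=> //; apply: sub_all wT => l.
by rewrite /gen_in => /andP[h1 h2]; rewrite !(subsetP sTU).
Qed.

(* phi_{N \ U} projects a word of P_T into P_{T n U} and fixes P_U. *)
Lemma in_PS_setI T U x : in_PS T x -> in_PS U x -> in_PS (T :&: U) x.
Proof.
move=> [w [wT xw]] [v [vU xv]]; exists (phi (~: U) w); split.
  rewrite all_filter; apply: sub_all wT => l /= lT; apply/implyP.
  by rewrite gen_avoidsC; move: lT; rewrite /gen_in !in_setI => /andP[-> ->] /andP[-> ->].
apply: (@peq_trans _ _ v) => //; rewrite -{1}(@phi_id (~: U) v) ?setCK //.
exact: phi_peq (peq_trans (peq_sym xv) xw).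
Qed.

Lemma in_PS_bigcap (I : Type) (r : seq I) (P : pred I) (F : I -> {set 'I_n}) x :
  (forall i, P i -> in_PS (F i) x) -> in_PS (\bigcap_(i <- r | P i) F i) x.
Proof.
move=> xF; apply: (big_ind (fun T : {set 'I_n} => in_PS T x)) => //.
- exact: in_PS_setT.
- by move=> T U; apply: in_PS_setI.
Qed.

Lemma all_winv (P : pred (gen n)) w :
  all (fun l => P l.1) (winv w) = all (fun l => P l.1) w.
Proof. by rewrite /winv all_rev all_map. Qed.

Lemma in_PS_comm T y z : in_PS T y -> in_PS T z -> in_PS T (comm y z).
Proof.
move=> [wy [yT yw]] [wz [zT zw]]; exists (comm wy wz); split.
  by rewrite /comm !all_cat !all_winv yT zT.
exact: peq_cat (peq_winv yw) (peq_cat (peq_winv zw) (peq_cat yw zw)).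
Qed.

Lemma in_supportP x a : in_support x a <-> ~ in_PS [set~ a] x.
Proof.
split=> [xa xNa | xNa T xT]; first by have := xa _ xNa; rewrite setC11.
case: (boolP (a \in T)) => // aNT; case: xNa; apply: in_PS_subset xT.
by apply/subsetP => b bT; rewrite in_setC1; apply: contraNneq aNT => <-.
Qed.

Lemma in_support_comm y z a :
  in_support (comm y z) a -> in_support y a \/ in_support z a.
Proof.
rewrite !in_supportP => yzNa; apply: NNPP => /not_or_and[/NNPP yNa /NNPP zNa].
exact: yzNa (in_PS_comm yNa zNa).
Qed.

Lemma in_support_gen (g : gen n) e a :
  in_support [:: (g, e)] a -> a \in [set (sval g).1; (sval g).2].
Proof.
apply; exists [:: (g, e)]; split; last exact: peq_refl.
by rewrite /= /gen_in !in_set2 !eqxx orbT.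
Qed.

Lemma in_PS_setC_support S x :
  (forall a, a \in S -> ~ in_support x a) -> in_PS (~: S) x.
Proof.
move=> xNS; apply: (@in_PS_subset (\bigcap_(a in S) [set~ a])).
  apply/subsetP => b /bigcapP bNS; rewrite in_setC.
  by apply/negP => bS; move: (bNS b bS); rewrite setC11.
apply: in_PS_bigcap => a aS; apply: NNPP; rewrite -in_supportP; exact: xNS.
Qed.

Lemma phi_monic_one S x a :
  monic x -> a \in S -> in_support x a -> is_one (phi S x).
Proof.
move=> xm aS; elim: xm => [g e|y z _ IHy _ IHz _] xa.
  move/in_support_gen: xa; rewrite in_set2 /is_one /phi /= /gen_avoids.
  by case/orP => /eqP <-; rewrite aS ?andbF; apply: peq_refl.
rewrite phi_comm; case: (in_support_comm xa) => [/IHy | /IHz].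
- exact: is_one_comml.
- exact: is_one_commr.
Qed.

End PureBraidWords.

Theorem proposition1p5 (n : nat) (x : word n) (S : {set 'I_n}) :
  monic x ->
  (is_one (phi S x) <-> exists a : 'I_n, a \in S /\ in_support x a).
Proof.
move=> xm; split=> [phix1 | [a [aS xa]]]; last exact: phi_monic_one xa.
apply: NNPP => noSupp; apply: (monic_not_one xm).
have xNS : in_PS (~: S) x.
  by apply: in_PS_setC_support => a aS xa; apply: noSupp; exists a.
exact: peq_trans (peq_sym (phi_in_PS_setC xNS)) phix1.
Qed.
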